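(* Let $(i,j,t,u,v)$ be an arbitrary permutation of $(1,2,3,4,5)$. The following monomials in $P_5$ are strictly inadmissible: (i) $x_i^{7}x_j^{9}x_t^{2}x_u^{15}x_v^{15}$, $x_i^{3}x_j^{7}x_t^{8}x_u^{15}x_v^{15}$, $x_i^{7}x_j^{3}x_t^{8}x_u^{15}x_v^{15}$, $x_i^{7}x_j^{8}x_t^{3}x_u^{15}x_v^{15}$, for $i<j<t$; (ii) $x_r^{15}\theta_{J_r}(w)$ for $1\le r\le5$ and $w$ one of $x_1^{7}x_2^{8}x_3^{7}x_4^{11}$, $x_1^{7}x_2^{9}x_3^{3}x_4^{14}$, $x_1^{7}x_2^{9}x_3^{6}x_4^{11}$, $x_1^{7}x_2^{9}x_3^{7}x_4^{10}$, $x_1^{7}x_2^{9}x_3^{14}x_4^{3}$, $x_1^{7}x_2^{11}x_3^{7}x_4^{8}$; (iii) $x_1^{7}x_2^{9}x_3^{7}x_4^{14}x_5^{11}$ and $x_1^{7}x_2^{9}x_3^{14}x_4^{7}x_5^{11}$.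
   Context: $P_k=\mathbb F_2[x_1,\dots,x_k]$, $\deg x_i=1$, with the standard action of the mod-2 Steenrod algebra $\mathcal A$. $\mathcal A_s$ is the sub-Hopf algebra generated by $Sq^i$, $0\le i\le2^s$, and $\mathcal A_s^+=\mathcal A^+\cap\mathcal A_s$. For a monomial $x$, $\nu_j(x)$ is the exponent of $x_j$, $\alpha_i(a)$ the $i$-th binary digit of $a$, $\omega(x)=(\omega_i(x))$ with $\omega_i(x)=\sum_j\alpha_{i-1}(\nu_j(x))$, $\sigma(x)=(\nu_1(x),\dots,\nu_k(x))$, both ordered left-lexicographically; for monomials of equal degree $u<v$ iff $\omega(u)<\omega(v)$, or $\omega(u)=\omega(v)$ and $\sigma(u)<\sigma(v)$. A monomial $u$ is strictly inadmissible if there exist monomials $v_1,\dots,v_r<u$ with $u+\sum_jv_j\in\mathcal A_{s-1}^+P_k$, where $s=\max\{i:\omega_i(u)>0\}$. For $1\le r\le5$, $J_r=(1,\dots,\hat r,\dots,5)$ and $\theta_{J_r}:P_4\to P_5$ is the algebra map sending $x_t$ to the variable indexed by the $t$-th entry of $J_r$. *)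

From HB Require Import structures.
From mathcomp Require Import all_boot all_order all_algebra all_fingroup.
From mathcomp Require Import mpoly.

Set Implicit Arguments.
Unset Strict Implicit.
Unset Printing Implicit Defensive.

Import GRing.Theory.
Local Open Scope ring_scope.

(* P_k = F_2[x_1,...,x_k]; variables indexed by 'I_k (x_1 is index 0). *)
Notation P k := {mpoly 'F_2[k]}.

(* Sq^i on the monomial x^m, via Sq^i(x^a) = C(a,i) x^(a+i) and the
   Cartan formula: Sq^i(x^m) = sum_{e, |e| = i} prod_j C(m_j,e_j) x^(m+e). *)
Definition sqm (k i : nat) (m : 'X_{1..k}) : P k :=
  \sum_(e : 'X_{1..k < i.+1} | mdeg e == i)
     ((\prod_(j < k) 'C(m j, e j))%:R : 'F_2) *: 'X_[m + e].

Definition Sq (k i : nat) (p : P k) : P k :=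
  \sum_(m <- msupp p) p@_m *: sqm i m.

(* p in A_t^+ P_k, where A_t is generated by Sq^i, 0 <= i <= 2^t:
   p is a finite sum of Sq^i(f) with 1 <= i <= 2^t. *)
Definition hitA (k t : nat) (p : P k) : Prop :=
  exists l : seq (nat * P k),
    all (fun c => 0 < c.1 <= 2 ^ t)%N l /\
    p = \sum_(c <- l) Sq c.1 c.2.

Definition alpha (i a : nat) : nat := odd (a %/ 2 ^ i).

Definition omega (k : nat) (x : 'X_{1..k}) (i : nat) : nat :=
  (\sum_(j < k) alpha i.-1 (x j))%N.

Definition omega_lt (k : nat) (u v : 'X_{1..k}) : Prop :=
  exists i, (0 < i)%N /\ (forall l, (0 < l < i)%N -> omega u l = omega v l)
            /\ (omega u i < omega v i)%N.

Definition omega_eq (k : nat) (u v : 'X_{1..k}) : Prop :=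
  forall i, (0 < i)%N -> omega u i = omega v i.

Definition sigma_lt (k : nat) (u v : 'X_{1..k}) : Prop :=
  exists j : 'I_k, (forall l : 'I_k, (l < j)%N -> u l = v l) /\ (u j < v j)%N.

Definition mono_lt (k : nat) (u v : 'X_{1..k}) : Prop :=
  mdeg u = mdeg v /\ (omega_lt u v \/ (omega_eq u v /\ sigma_lt u v)).

(* s(u) = max{ i : omega_i(u) > 0 } (bits of exponents are at positions
   < deg u + 1, so i ranges over 1..deg u + 1). *)
Definition s_of (k : nat) (u : 'X_{1..k}) : nat :=
  (\max_(i < (mdeg u).+2 | (0 < i)%N && (0 < omega u i)%N) i)%N.

Definition strictly_inadmissible (k : nat) (u : 'X_{1..k}) : Prop :=
  exists vs : seq 'X_{1..k},
    (forall v, v \in vs -> mono_lt v u) /\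
    hitA (s_of u).-1 ('X_[u] + \sum_(v <- vs) 'X_[v]).

(* the monomial x_{p(0)}^{a0} x_{p(1)}^{a1} ... x_{p(4)}^{a4} in P_5 *)
Definition pmono (p : 'S_5) (a : seq nat) : 'X_{1..5} :=
  [multinom nth 0%N a ((p^-1)%g l) | l < 5].

Definition mono4 (a : seq nat) : 'X_{1..4} := [multinom nth 0%N a l | l < 4].

(* x_r^15 * theta_{J_r}(w): theta_{J_r} sends x_t to x_{J_r(t)}, where J_r
   lists {1..5} \ {r} increasingly, i.e. J_r(t) = lift r t. *)
Definition xr15_theta (r : 'I_5) (w : 'X_{1..4}) : 'X_{1..5} :=
  [multinom (if unlift r l is Some t then w t else 15%N) | l < 5].

Definition mono5 (a : seq nat) : 'X_{1..5} := [multinom nth 0%N a l | l < 5].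

From HB Require Import structures.
From mathcomp Require Import all_boot all_order all_algebra all_fingroup.
From mathcomp Require Import mpoly.
From mathcomp Require Import zify.

Set Implicit Arguments.
Unset Strict Implicit.
Unset Printing Implicit Defensive.

Import GRing.Theory.

(* Each monomial u is shown strictly inadmissible by an explicit certificate: a list
   of pairs (i, m) with 0 < i <= 2^(s-1) whose hit sum \sum Sq^i(x^m) is x^u plus
   monomials smaller than u.  By the Cartan formula, Sq^i(x^m) is the sum of the
   x^(m+e) over the compositions e of i with every binomial C(m_j, e_j) odd, so over
   F_2 a hit sum is the sum of the monomials occurring an odd number of times in a
   finite list, and each certificate is checked by evaluation.  The cases indexed by
   permutations reduce to the finitely many placements of the exponents. *)

Definition pascal_next (r : seq bool) : seq bool :=
  mkseq (fun i => if i is i'.+1 then nth false r i (+) nth false r i' else true)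
        (size r).+1.

Fixpoint odd_binomial_row (n : nat) : seq bool :=
  if n is n'.+1 then pascal_next (odd_binomial_row n') else [:: true].

Lemma size_odd_binomial_row n : size (odd_binomial_row n) = n.+1.
Proof. by elim: n => // n IHn; rewrite /pascal_next size_mkseq IHn. Qed.

Lemma nth_odd_binomial_row n i : nth false (odd_binomial_row n) i = odd 'C(n, i).
Proof.
elim: n i => [|n IHn] i; first by rewrite bin0n; case: i => //= i; rewrite nth_nil.
rewrite [odd_binomial_row _]/= /pascal_next.
have [lt_i|le_i] := ltnP i n.+2; last first.
  by rewrite nth_default ?size_mkseq ?size_odd_binomial_row // bin_small.
rewrite nth_mkseq ?size_odd_binomial_row //.
by case: i lt_i => // i _; rewrite !IHn binS oddD addbC.
Qed.

Fixpoint compositions (k i : nat) : seq (seq nat) :=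
  if k is k'.+1 then [seq a :: s | a <- iota 0 i.+1, s <- compositions k' (i - a)]
  else if i == 0 then [:: [::]] else [::].

Lemma mem_compositions k i s :
  (s \in compositions k i) = (size s == k) && (sumn s == i).
Proof.
elim: k i s => [|k IHk] i s; first by case: i; case: s.
apply/allpairsPdep/idP => [[a [t [+ + ->]]]|].
  by rewrite IHk mem_iota /= => a_le /andP[/eqP-> /eqP->]; rewrite eqxx; apply/eqP; lia.
case: s => [|a t] // /andP[/eqP[size_t] /eqP sum_at]; exists a, t; split => //.
  by rewrite mem_iota; move: sum_at => /=; lia.
by rewrite IHk size_t -sum_at /= addKn !eqxx.
Qed.

Lemma uniq_compositions k i : uniq (compositions k i).
Proof.
elim: k i => [|k IHk] i; first by case: i.
apply: allpairs_uniq_dep => [|a _|[a s] [b t] _ _ /= [-> ->]] //.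
exact: iota_uniq.
Qed.

Section MonomialsAsSequences.

Variable k : nat.

Definition monoseq (s : seq nat) : 'X_{1..k} := [multinom nth 0 s i | i < k].

Definition addseq (s t : seq nat) : seq nat :=
  [seq nth 0 s j + nth 0 t j | j <- iota 0 k].

Lemma monoseqE s (j : 'I_k) : monoseq s j = nth 0 s j.
Proof. exact: mnmE. Qed.

Lemma monoseq_mnm (x : 'X_{1..k}) : monoseq x = x.
Proof. by apply/mnmP => j; rewrite monoseqE (mnm_nth 0). Qed.

Lemma monoseqD s t : monoseq (addseq s t) = (monoseq s + monoseq t)%MM.
Proof.
apply/mnmP => j; rewrite mnmDE !monoseqE (nth_map 0) ?size_iota //.
by rewrite nth_iota.
Qed.

Lemma mdeg_monoseq s : size s = k -> mdeg (monoseq s) = sumn s.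
Proof.
move=> size_s; rewrite mdegE sumnE (big_nth 0) size_s big_mkord.
by apply: eq_bigr => j _; rewrite monoseqE.
Qed.

Lemma monoseq_compositions i (x : 'X_{1..k}) :
  (x \in map monoseq (compositions k i)) = (mdeg x == i).
Proof.
apply/mapP/idP => [[s + ->]|deg_x].
  by rewrite mem_compositions => /andP[/eqP/mdeg_monoseq-> /eqP->].
exists (x : seq nat); last by rewrite monoseq_mnm.
by rewrite mem_compositions size_tuple eqxx -(mdeg_monoseq (size_tuple x)) monoseq_mnm.
Qed.

Lemma uniq_monoseq_compositions i : uniq (map monoseq (compositions k i)).
Proof.
rewrite map_inj_in_uniq ?uniq_compositions // => s t.
rewrite !mem_compositions => /andP[/eqP size_s _] /andP[/eqP size_t _] /mnmP eq_st.
apply: (@eq_from_nth _ 0) => [|j]; first by rewrite size_s size_t.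
by rewrite size_s => lt_j; have := eq_st (Ordinal lt_j); rewrite !monoseqE.
Qed.

Definition odd_multinomial (m e : seq nat) : bool :=
  all (fun j => nth false (odd_binomial_row (nth 0 m j)) (nth 0 e j)) (iota 0 k).

Lemma odd_multinomialE m e :
  odd (\prod_(j < k) 'C(monoseq m j, monoseq e j)) = odd_multinomial m e.
Proof.
rewrite (big_morph odd oddM (erefl : odd 1 = true)).
under eq_bigr => j _ do rewrite !monoseqE -nth_odd_binomial_row.
pose b j := nth false (odd_binomial_row (nth 0 m j)) (nth 0 e j).
by rewrite -(big_mkord xpredT b) big_all /index_iota subn0.
Qed.

End MonomialsAsSequences.

Section SquaresOfMonomials.

Local Open Scope ring_scope.

Variable k : nat.

Lemma natr_F2 n : (n%:R : 'F_2) = (odd n)%:R.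
Proof. by rewrite -(Fp_nat_mod (p := 2)) // modn2. Qed.

Lemma Sq_X i (m : 'X_{1..k}) : Sq i ('X_[m] : P k) = sqm i m.
Proof. by rewrite /Sq msuppX big_seq1 mcoeffX eqxx scale1r. Qed.

Lemma sqm_monoseq i m :
  sqm i (monoseq k m) =
  \sum_(e <- compositions k i | odd_multinomial k m e) 'X_[monoseq k (addseq k m e)].
Proof.
pose F (e : 'X_{1..k}) : P k :=
  ((\prod_(j < k) 'C(monoseq k m j, e j))%:R : 'F_2) *: 'X_[monoseq k m + e].
rewrite /sqm -big_filter (eq_bigr (F \o @bmnm k i.+1)) //.
rewrite -(big_map (@bmnm k i.+1) xpredT F).
rewrite (perm_big (map (monoseq k) (compositions k i))); last first.
  apply: uniq_perm => [||x]; last rewrite monoseq_compositions.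
  - by rewrite map_inj_uniq ?filter_uniq ?index_enum_uniq //; apply: val_inj.
  - exact: uniq_monoseq_compositions.
  apply/mapP/idP => [[e + ->]|deg_x]; first by rewrite mem_filter => /andP[].
  have lt_deg : (mdeg x < i.+1)%N by rewrite (eqP deg_x).
  by exists (BMultinom lt_deg); rewrite // mem_filter deg_x mem_index_enum.
rewrite big_map [RHS]big_mkcond; apply: eq_bigr => e _.
rewrite /F natr_F2 odd_multinomialE monoseqD.
by case: odd_multinomial; rewrite ?scale1r ?scale0r.
Qed.

End SquaresOfMonomials.

Definition odd_support (T : eqType) (r : seq T) : seq T :=
  undup [seq x <- r | odd (count_mem x r)].

Section CharacteristicTwo.

Local Open Scope ring_scope.

Variables (V : nmodType) (I : eqType).
Hypothesis addvv : forall v : V, v + v = 0.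

Lemma mulrn_odd (v : V) n : v *+ n = v *+ odd n.
Proof.
by rewrite -{1}(odd_double_half n) mulrnDr -mul2n mulrnA mulr2n addvv mul0rn addr0.
Qed.

Lemma sum_odd_support (r : seq I) (F : I -> V) :
  \sum_(i <- r) F i = \sum_(i <- odd_support r) F i.
Proof.
rewrite /odd_support -filter_undup big_filter -big_undup_iterop_count [RHS]big_mkcond.
by apply: eq_bigr => i _; rewrite [LHS]mulrn_odd; case: odd.
Qed.

End CharacteristicTwo.

Lemma addvv_F2 k (p : P k) : (p + p = 0)%R.
Proof. by rewrite -mulr2n -scaler_nat natr_F2 scale0r. Qed.

Section HitCertificates.

Variable k : nat.

Definition sq_terms (W : seq (nat * seq nat)) : seq (seq nat) :=
  flatten [seq [seq addseq k w.2 e | e <- compositions k w.1 & odd_multinomial k w.2 e]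
          | w <- W].

Definition odd_terms W : seq (seq nat) := odd_support (sq_terms W).

Lemma sum_Sq_odd_terms W :
  (\sum_(w <- W) Sq w.1 ('X_[monoseq k w.2] : P k) =
   \sum_(s <- odd_terms W) 'X_[monoseq k s])%R.
Proof.
rewrite -sum_odd_support; last exact: addvv_F2.
rewrite big_flatten /= big_map; apply: eq_bigr => w _.
by rewrite Sq_X sqm_monoseq big_map big_filter.
Qed.

End HitCertificates.

Definition omega_seq (s : seq nat) (i : nat) : nat := sumn [seq alpha i.-1 a | a <- s].

Lemma omega_monoseq k s i : size s = k -> omega (monoseq k s) i = omega_seq s i.
Proof.
move=> size_s; rewrite /omega /omega_seq sumnE big_map (big_nth 0) size_s big_mkord.
by apply: eq_bigr => j _; rewrite monoseqE.
Qed.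

Lemma leq_sumn s a : a \in s -> a <= sumn s.
Proof. by elim: s => //= b s IHs; rewrite inE => /orP[/eqP->|/IHs]; lia. Qed.

Lemma omega_seq_eq0 s i : all (fun a => a < 2 ^ i.-1) s -> omega_seq s i = 0.
Proof.
move=> /allP small_s; rewrite /omega_seq sumnE big_map big1_seq // => a /andP[_ a_in].
by rewrite /alpha divn_small ?small_s.
Qed.

Lemma omega_seq_trunc_log s i : trunc_log 2 (sumn s) < i.-1 -> omega_seq s i = 0.
Proof.
move=> lt_log_i; apply/omega_seq_eq0/allP => a a_in.
apply: leq_ltn_trans (leq_sumn a_in) _.
by apply: leq_trans (@trunc_log_ltn 2 (sumn s) isT) _; rewrite leq_exp2l.
Qed.

Definition lex_ltb (f g : nat -> nat) (a n : nat) : bool :=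
  has (fun i => (f i < g i) && all (fun l => f l == g l) (iota a (i - a))) (iota a n).

Lemma lex_ltbP f g a n : lex_ltb f g a n ->
  exists i, [/\ a <= i < a + n, forall l, a <= l < i -> f l = g l & f i < g i].
Proof.
case/hasP => i; rewrite mem_iota => range_i /andP[lt_fg /allP eq_fg].
exists i; split => // l /andP[le_al lt_li]; apply/eqP/eq_fg.
by rewrite mem_iota le_al /=; lia.
Qed.

(* All exponents are at most the degree, which is below 2^b, so omega_i vanishes
   for i > b. *)
Definition mono_ltb k (v u : seq nat) : bool :=
  let b := (trunc_log 2 (sumn u)).+1 in
  [&& size v == k, size u == k, sumn v == sumn u &
      lex_ltb (omega_seq v) (omega_seq u) 1 b ||
      all (fun i => omega_seq v i == omega_seq u i) (iota 1 b) &&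
      lex_ltb (nth 0 v) (nth 0 u) 0 k].

Lemma mono_ltbP k v u : mono_ltb k v u -> mono_lt (monoseq k v) (monoseq k u).
Proof.
case/and4P=> /eqP size_v /eqP size_u /eqP deg_vu cmp_vu.
split; first by rewrite !mdeg_monoseq.
case/orP: cmp_vu => [/lex_ltbP[i [range_i eq_vu lt_vu]]|/andP[/allP eq_vu /lex_ltbP[j]]].
  left; exists i; rewrite !omega_monoseq //; split; first by case/andP: range_i.
  by split=> // l range_l; rewrite !omega_monoseq // eq_vu.
rewrite add0n => -[/andP[_ lt_jk] eq_vu' lt_vu']; right; split.
  move=> i lt0i; rewrite !omega_monoseq //.
  have [le_ib|lt_bi] := leqP i (trunc_log 2 (sumn u)).+1.
    by apply/eqP/eq_vu; rewrite mem_iota lt0i /=; lia.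
  by rewrite !omega_seq_trunc_log ?deg_vu //; lia.
exists (Ordinal lt_jk); rewrite !monoseqE; split=> // l lt_lj.
by rewrite !monoseqE eq_vu'.
Qed.

Lemma s_of_monoseq k u s : size u = k -> 0 < s -> s <= (sumn u).+1 ->
  all (fun a => a < 2 ^ s) u -> 0 < omega_seq u s -> s_of (monoseq k u) = s.
Proof.
move=> size_u lt0s le_s_deg /allP small_u omega_s; apply/eqP; rewrite eqn_leq.
apply/andP; split.
  apply/bigmax_leqP => i /andP[_]; rewrite omega_monoseq //.
  apply: contraTT; rewrite -ltnNge => lt_si; rewrite lt0n negbK.
  apply/eqP/omega_seq_eq0/allP => a /small_u /leq_trans; apply.
  by rewrite leq_exp2l //; lia.
have lt_s_deg : s < (mdeg (monoseq k u)).+2 by rewrite mdeg_monoseq.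
apply: (@leq_bigmax_cond _ _ (fun i : 'I__ => val i) (Ordinal lt_s_deg)).
by rewrite /= omega_monoseq ?lt0s.
Qed.

Definition certifies k (s : nat) (u : seq nat) (W : seq (nat * seq nat)) : bool :=
  [&& size u == k, 0 < s, s <= (sumn u).+1, all (fun a => a < 2 ^ s) u,
      0 < omega_seq u s, all (fun w => 0 < w.1 <= 2 ^ s.-1) W,
      u \in odd_terms k W &
      all (fun v => (v != u) ==> mono_ltb k v u) (odd_terms k W)].

Lemma certifies_strictly_inadmissible k s u W :
  certifies k s u W -> strictly_inadmissible (monoseq k u).
Proof.
case/and5P=> /eqP size_u lt0s le_s_deg small_u /and4P[omega_s W_range u_odd lt_odd].
exists (map (monoseq k) (rem u (odd_terms k W))); split.
  move=> _ /mapP[v v_in ->]; apply: mono_ltbP.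
  have /implyP := allP lt_odd v (mem_rem v_in); apply.
  by move: v_in; rewrite mem_rem_uniq ?undup_uniq // => /andP[].
rewrite (s_of_monoseq size_u lt0s le_s_deg small_u omega_s).
exists [seq (w.1, 'X_[monoseq k w.2]) | w <- W]; split; first by rewrite all_map.
by rewrite !big_map sum_Sq_odd_terms (big_rem _ u_odd).
Qed.

Definition perm_seq n (p : 'S_n) : seq nat := [seq val (p i) | i <- enum 'I_n].

Lemma nth_perm_seq n (p : 'S_n) (j : 'I_n) : nth 0 (perm_seq p) j = p j.
Proof. by rewrite /perm_seq (nth_map j) ?size_enum_ord // nth_ord_enum. Qed.

Lemma perm_seq_iota n (p : 'S_n) : perm_eq (perm_seq p) (iota 0 n).
Proof.
rewrite /perm_seq (map_comp val p) -val_enum_ord; apply: perm_map.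
apply: uniq_perm => [||j]; rewrite ?(map_inj_uniq (@perm_inj _ p)) ?enum_uniq //.
by rewrite mem_enum -[j](permKV p) map_f ?mem_enum.
Qed.

Definition place (x a : seq nat) : seq nat :=
  [seq nth 0 a (index j x) | j <- iota 0 (size x)].

Lemma pmono_place (p : 'S_5) a : pmono p a = monoseq 5 (place (perm_seq p) a).
Proof.
apply/mnmP => l; rewrite mnmE monoseqE.
have size_p : size (perm_seq p) = 5 by rewrite size_map size_enum_ord.
rewrite (nth_map 0) ?size_iota ?size_p // nth_iota // add0n.
suff -> : index (l : nat) (perm_seq p) = p^-1%g l by [].
rewrite -{1}[l](permKV p) -(nth_perm_seq p) index_uniq ?size_p //.
by rewrite (perm_uniq (perm_seq_iota p)) iota_uniq.
Qed.

Lemma xr15_theta_mono4 (r : 'I_5) w : size w = 4 ->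
  xr15_theta r (mono4 w) = monoseq 5 (take r w ++ 15 :: drop r w).
Proof.
move=> size_w; apply/mnmP => l; rewrite mnmE monoseqE.
have le_r_w : r <= size w by rewrite size_w -ltnS ltn_ord.
case: unliftP => [t ->|->]; last by rewrite nth_cat size_takel // ltnn subnn.
rewrite /mono4 mnmE /= /bump nth_cat size_takel //.
case: (leqP r t) => le_rt; last by rewrite add0n le_rt nth_take.
by rewrite add1n ltnNge (leq_trans le_rt) //= subSn //= nth_drop subnKC.
Qed.

Definition certificates : seq (seq nat * seq (nat * seq nat)) := [::
  ([:: 3; 7; 8; 15; 15],
   [:: (1, [:: 3; 7; 7; 15; 15]); (2, [:: 2; 7; 7; 15; 15]); (4, [:: 3; 4; 7; 15; 15])]);
  ([:: 3; 7; 15; 8; 15],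
   [:: (1, [:: 3; 7; 15; 7; 15]); (2, [:: 2; 7; 15; 7; 15]); (4, [:: 3; 4; 15; 7; 15])]);
  ([:: 3; 7; 15; 15; 8],
   [:: (1, [:: 3; 7; 15; 15; 7]); (2, [:: 2; 7; 15; 15; 7]); (4, [:: 3; 4; 15; 15; 7])]);
  ([:: 3; 15; 7; 8; 15],
   [:: (1, [:: 3; 15; 7; 7; 15]); (2, [:: 2; 15; 7; 7; 15]); (4, [:: 3; 15; 4; 7; 15])]);
  ([:: 3; 15; 7; 15; 8],
   [:: (1, [:: 3; 15; 7; 15; 7]); (2, [:: 2; 15; 7; 15; 7]); (4, [:: 3; 15; 4; 15; 7])]);
  ([:: 3; 15; 15; 7; 8],
   [:: (1, [:: 3; 15; 15; 7; 7]); (2, [:: 2; 15; 15; 7; 7]); (4, [:: 3; 15; 15; 4; 7])]);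
  ([:: 7; 3; 8; 15; 15],
   [:: (1, [:: 5; 5; 7; 15; 15]); (1, [:: 7; 3; 7; 15; 15]); (2, [:: 3; 6; 7; 15; 15]); (2, [:: 6; 3; 7; 15; 15]); (2, [:: 7; 2; 7; 15; 15]); (4, [:: 5; 2; 7; 15; 15])]);
  ([:: 7; 3; 15; 8; 15],
   [:: (1, [:: 5; 5; 15; 7; 15]); (1, [:: 7; 3; 15; 7; 15]); (2, [:: 3; 6; 15; 7; 15]); (2, [:: 6; 3; 15; 7; 15]); (2, [:: 7; 2; 15; 7; 15]); (4, [:: 5; 2; 15; 7; 15])]);
  ([:: 7; 3; 15; 15; 8],
   [:: (1, [:: 5; 5; 15; 15; 7]); (1, [:: 7; 3; 15; 15; 7]); (2, [:: 3; 6; 15; 15; 7]); (2, [:: 6; 3; 15; 15; 7]); (2, [:: 7; 2; 15; 15; 7]); (4, [:: 5; 2; 15; 15; 7])]);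
  ([:: 7; 8; 3; 15; 15],
   [:: (1, [:: 7; 5; 5; 15; 15]); (2, [:: 7; 3; 6; 15; 15]); (2, [:: 7; 6; 3; 15; 15]); (4, [:: 5; 3; 6; 15; 15]); (4, [:: 5; 6; 3; 15; 15])]);
  ([:: 7; 8; 7; 11; 15],
   [:: (1, [:: 7; 5; 7; 13; 15]); (2, [:: 7; 3; 7; 14; 15]); (2, [:: 7; 6; 7; 11; 15]); (4, [:: 5; 3; 7; 14; 15]); (4, [:: 5; 6; 7; 11; 15])]);
  ([:: 7; 8; 7; 15; 11],
   [:: (1, [:: 7; 5; 7; 15; 13]); (2, [:: 7; 3; 7; 15; 14]); (2, [:: 7; 6; 7; 15; 11]); (4, [:: 5; 3; 7; 15; 14]); (4, [:: 5; 6; 7; 15; 11])]);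
  ([:: 7; 8; 15; 3; 15],
   [:: (1, [:: 7; 5; 15; 5; 15]); (2, [:: 7; 3; 15; 6; 15]); (2, [:: 7; 6; 15; 3; 15]); (4, [:: 5; 3; 15; 6; 15]); (4, [:: 5; 6; 15; 3; 15])]);
  ([:: 7; 8; 15; 7; 11],
   [:: (1, [:: 7; 5; 15; 7; 13]); (2, [:: 7; 3; 15; 7; 14]); (2, [:: 7; 6; 15; 7; 11]); (4, [:: 5; 3; 15; 7; 14]); (4, [:: 5; 6; 15; 7; 11])]);
  ([:: 7; 8; 15; 15; 3],
   [:: (1, [:: 7; 5; 15; 15; 5]); (2, [:: 7; 3; 15; 15; 6]); (2, [:: 7; 6; 15; 15; 3]); (4, [:: 5; 3; 15; 15; 6]); (4, [:: 5; 6; 15; 15; 3])]);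
  ([:: 7; 9; 2; 15; 15],
   [:: (1, [:: 5; 7; 5; 15; 15]); (1, [:: 7; 7; 3; 15; 15]); (2, [:: 3; 7; 6; 15; 15]); (2, [:: 6; 7; 3; 15; 15]); (2, [:: 7; 7; 2; 15; 15]); (4, [:: 5; 7; 2; 15; 15])]);
  ([:: 7; 9; 3; 14; 15],
   [:: (1, [:: 5; 7; 13; 7; 15]); (1, [:: 7; 7; 5; 13; 15]); (1, [:: 7; 7; 11; 7; 15]); (1, [:: 11; 3; 5; 13; 15]); (2, [:: 3; 7; 14; 7; 15]); (2, [:: 6; 7; 11; 7; 15]); (2, [:: 7; 7; 3; 14; 15]); (2, [:: 7; 7; 6; 11; 15]); (2, [:: 7; 7; 10; 7; 15]); (2, [:: 11; 3; 6; 11; 15]); (2, [:: 11; 3; 10; 7; 15]); (4, [:: 5; 7; 3; 14; 15]); (4, [:: 5; 7; 6; 11; 15]); (4, [:: 5; 7; 10; 7; 15]); (4, [:: 7; 3; 5; 14; 15]); (4, [:: 7; 3; 12; 7; 15]); (4, [:: 7; 5; 6; 11; 15]); (4, [:: 7; 5; 10; 7; 15]); (4, [:: 13; 3; 6; 7; 15])]);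
  ([:: 7; 9; 3; 15; 14],
   [:: (1, [:: 5; 7; 13; 15; 7]); (1, [:: 7; 7; 5; 15; 13]); (1, [:: 7; 7; 11; 15; 7]); (1, [:: 11; 3; 5; 15; 13]); (2, [:: 3; 7; 14; 15; 7]); (2, [:: 6; 7; 11; 15; 7]); (2, [:: 7; 7; 3; 15; 14]); (2, [:: 7; 7; 6; 15; 11]); (2, [:: 7; 7; 10; 15; 7]); (2, [:: 11; 3; 6; 15; 11]); (2, [:: 11; 3; 10; 15; 7]); (4, [:: 5; 7; 3; 15; 14]); (4, [:: 5; 7; 6; 15; 11]); (4, [:: 5; 7; 10; 15; 7]); (4, [:: 7; 3; 5; 15; 14]); (4, [:: 7; 3; 12; 15; 7]); (4, [:: 7; 5; 6; 15; 11]); (4, [:: 7; 5; 10; 15; 7]); (4, [:: 13; 3; 6; 15; 7])]);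
  ([:: 7; 9; 6; 11; 15],
   [:: (1, [:: 7; 7; 5; 13; 15]); (2, [:: 7; 7; 3; 14; 15]); (2, [:: 7; 7; 6; 11; 15]); (4, [:: 5; 7; 3; 14; 15]); (4, [:: 5; 7; 6; 11; 15])]);
  ([:: 7; 9; 6; 15; 11],
   [:: (1, [:: 7; 7; 5; 15; 13]); (2, [:: 7; 7; 3; 15; 14]); (2, [:: 7; 7; 6; 15; 11]); (4, [:: 5; 7; 3; 15; 14]); (4, [:: 5; 7; 6; 15; 11])]);
  ([:: 7; 9; 7; 10; 15],
   [:: (1, [:: 5; 7; 7; 13; 15]); (1, [:: 7; 7; 7; 11; 15]); (2, [:: 3; 7; 7; 14; 15]); (2, [:: 6; 7; 7; 11; 15]); (2, [:: 7; 7; 7; 10; 15]); (4, [:: 5; 7; 7; 10; 15])]);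
  ([:: 7; 9; 7; 14; 11],
   [:: (1, [:: 7; 7; 7; 13; 13]); (2, [:: 7; 7; 7; 11; 14]); (2, [:: 7; 7; 7; 14; 11]); (4, [:: 5; 7; 7; 11; 14]); (4, [:: 5; 7; 7; 14; 11])]);
  ([:: 7; 9; 7; 15; 10],
   [:: (1, [:: 5; 7; 7; 15; 13]); (1, [:: 7; 7; 7; 15; 11]); (2, [:: 3; 7; 7; 15; 14]); (2, [:: 6; 7; 7; 15; 11]); (2, [:: 7; 7; 7; 15; 10]); (4, [:: 5; 7; 7; 15; 10])]);
  ([:: 7; 9; 14; 3; 15],
   [:: (1, [:: 7; 7; 13; 5; 15]); (2, [:: 7; 7; 11; 6; 15]); (2, [:: 7; 7; 14; 3; 15]); (4, [:: 5; 7; 11; 6; 15]); (4, [:: 5; 7; 14; 3; 15])]);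
  ([:: 7; 9; 14; 7; 11],
   [:: (1, [:: 7; 7; 13; 7; 13]); (2, [:: 7; 7; 11; 7; 14]); (2, [:: 7; 7; 14; 7; 11]); (4, [:: 5; 7; 11; 7; 14]); (4, [:: 5; 7; 14; 7; 11])]);
  ([:: 7; 9; 14; 15; 3],
   [:: (1, [:: 7; 7; 13; 15; 5]); (2, [:: 7; 7; 11; 15; 6]); (2, [:: 7; 7; 14; 15; 3]); (4, [:: 5; 7; 11; 15; 6]); (4, [:: 5; 7; 14; 15; 3])]);
  ([:: 7; 9; 15; 2; 15],
   [:: (1, [:: 5; 7; 15; 5; 15]); (1, [:: 7; 7; 15; 3; 15]); (2, [:: 3; 7; 15; 6; 15]); (2, [:: 6; 7; 15; 3; 15]); (2, [:: 7; 7; 15; 2; 15]); (4, [:: 5; 7; 15; 2; 15])]);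
  ([:: 7; 9; 15; 3; 14],
   [:: (1, [:: 5; 7; 15; 13; 7]); (1, [:: 7; 7; 15; 5; 13]); (1, [:: 7; 7; 15; 11; 7]); (1, [:: 11; 3; 15; 5; 13]); (2, [:: 3; 7; 15; 14; 7]); (2, [:: 6; 7; 15; 11; 7]); (2, [:: 7; 7; 15; 3; 14]); (2, [:: 7; 7; 15; 6; 11]); (2, [:: 7; 7; 15; 10; 7]); (2, [:: 11; 3; 15; 6; 11]); (2, [:: 11; 3; 15; 10; 7]); (4, [:: 5; 7; 15; 3; 14]); (4, [:: 5; 7; 15; 6; 11]); (4, [:: 5; 7; 15; 10; 7]); (4, [:: 7; 3; 15; 5; 14]); (4, [:: 7; 3; 15; 12; 7]); (4, [:: 7; 5; 15; 6; 11]); (4, [:: 7; 5; 15; 10; 7]); (4, [:: 13; 3; 15; 6; 7])]);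
  ([:: 7; 9; 15; 6; 11],
   [:: (1, [:: 7; 7; 15; 5; 13]); (2, [:: 7; 7; 15; 3; 14]); (2, [:: 7; 7; 15; 6; 11]); (4, [:: 5; 7; 15; 3; 14]); (4, [:: 5; 7; 15; 6; 11])]);
  ([:: 7; 9; 15; 7; 10],
   [:: (1, [:: 5; 7; 15; 7; 13]); (1, [:: 7; 7; 15; 7; 11]); (2, [:: 3; 7; 15; 7; 14]); (2, [:: 6; 7; 15; 7; 11]); (2, [:: 7; 7; 15; 7; 10]); (4, [:: 5; 7; 15; 7; 10])]);
  ([:: 7; 9; 15; 14; 3],
   [:: (1, [:: 7; 7; 15; 13; 5]); (2, [:: 7; 7; 15; 11; 6]); (2, [:: 7; 7; 15; 14; 3]); (4, [:: 5; 7; 15; 11; 6]); (4, [:: 5; 7; 15; 14; 3])]);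
  ([:: 7; 9; 15; 15; 2],
   [:: (1, [:: 5; 7; 15; 15; 5]); (1, [:: 7; 7; 15; 15; 3]); (2, [:: 3; 7; 15; 15; 6]); (2, [:: 6; 7; 15; 15; 3]); (2, [:: 7; 7; 15; 15; 2]); (4, [:: 5; 7; 15; 15; 2])]);
  ([:: 7; 11; 7; 8; 15],
   [:: (1, [:: 5; 13; 7; 7; 15]); (1, [:: 7; 11; 7; 7; 15]); (1, [:: 7; 13; 3; 9; 15]); (1, [:: 7; 13; 5; 7; 15]); (2, [:: 3; 14; 7; 7; 15]); (2, [:: 6; 11; 7; 7; 15]); (2, [:: 7; 10; 7; 7; 15]); (2, [:: 7; 11; 3; 10; 15]); (2, [:: 7; 11; 6; 7; 15]); (2, [:: 7; 14; 3; 7; 15]); (4, [:: 5; 10; 7; 7; 15]); (4, [:: 5; 11; 6; 7; 15]); (4, [:: 5; 14; 3; 7; 15])]);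
  ([:: 7; 11; 7; 15; 8],
   [:: (1, [:: 5; 13; 7; 15; 7]); (1, [:: 7; 11; 7; 15; 7]); (1, [:: 7; 13; 3; 15; 9]); (1, [:: 7; 13; 5; 15; 7]); (2, [:: 3; 14; 7; 15; 7]); (2, [:: 6; 11; 7; 15; 7]); (2, [:: 7; 10; 7; 15; 7]); (2, [:: 7; 11; 3; 15; 10]); (2, [:: 7; 11; 6; 15; 7]); (2, [:: 7; 14; 3; 15; 7]); (4, [:: 5; 10; 7; 15; 7]); (4, [:: 5; 11; 6; 15; 7]); (4, [:: 5; 14; 3; 15; 7])]);
  ([:: 7; 11; 15; 7; 8],
   [:: (1, [:: 5; 13; 15; 7; 7]); (1, [:: 7; 11; 15; 7; 7]); (1, [:: 7; 13; 15; 3; 9]); (1, [:: 7; 13; 15; 5; 7]); (2, [:: 3; 14; 15; 7; 7]); (2, [:: 6; 11; 15; 7; 7]); (2, [:: 7; 10; 15; 7; 7]); (2, [:: 7; 11; 15; 3; 10]); (2, [:: 7; 11; 15; 6; 7]); (2, [:: 7; 14; 15; 3; 7]); (4, [:: 5; 10; 15; 7; 7]); (4, [:: 5; 11; 15; 6; 7]); (4, [:: 5; 14; 15; 3; 7])]);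
  ([:: 7; 15; 3; 8; 15],
   [:: (1, [:: 5; 15; 5; 7; 15]); (1, [:: 7; 15; 3; 7; 15]); (2, [:: 3; 15; 6; 7; 15]); (2, [:: 6; 15; 3; 7; 15]); (2, [:: 7; 15; 2; 7; 15]); (4, [:: 5; 15; 2; 7; 15])]);
  ([:: 7; 15; 3; 15; 8],
   [:: (1, [:: 5; 15; 5; 15; 7]); (1, [:: 7; 15; 3; 15; 7]); (2, [:: 3; 15; 6; 15; 7]); (2, [:: 6; 15; 3; 15; 7]); (2, [:: 7; 15; 2; 15; 7]); (4, [:: 5; 15; 2; 15; 7])]);
  ([:: 7; 15; 8; 3; 15],
   [:: (1, [:: 7; 15; 5; 5; 15]); (2, [:: 7; 15; 3; 6; 15]); (2, [:: 7; 15; 6; 3; 15]); (4, [:: 5; 15; 3; 6; 15]); (4, [:: 5; 15; 6; 3; 15])]);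
  ([:: 7; 15; 8; 7; 11],
   [:: (1, [:: 7; 15; 5; 7; 13]); (2, [:: 7; 15; 3; 7; 14]); (2, [:: 7; 15; 6; 7; 11]); (4, [:: 5; 15; 3; 7; 14]); (4, [:: 5; 15; 6; 7; 11])]);
  ([:: 7; 15; 8; 15; 3],
   [:: (1, [:: 7; 15; 5; 15; 5]); (2, [:: 7; 15; 3; 15; 6]); (2, [:: 7; 15; 6; 15; 3]); (4, [:: 5; 15; 3; 15; 6]); (4, [:: 5; 15; 6; 15; 3])]);
  ([:: 7; 15; 9; 2; 15],
   [:: (1, [:: 5; 15; 7; 5; 15]); (1, [:: 7; 15; 7; 3; 15]); (2, [:: 3; 15; 7; 6; 15]); (2, [:: 6; 15; 7; 3; 15]); (2, [:: 7; 15; 7; 2; 15]); (4, [:: 5; 15; 7; 2; 15])]);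
  ([:: 7; 15; 9; 3; 14],
   [:: (1, [:: 5; 15; 7; 13; 7]); (1, [:: 7; 15; 7; 5; 13]); (1, [:: 7; 15; 7; 11; 7]); (1, [:: 11; 15; 3; 5; 13]); (2, [:: 3; 15; 7; 14; 7]); (2, [:: 6; 15; 7; 11; 7]); (2, [:: 7; 15; 7; 3; 14]); (2, [:: 7; 15; 7; 6; 11]); (2, [:: 7; 15; 7; 10; 7]); (2, [:: 11; 15; 3; 6; 11]); (2, [:: 11; 15; 3; 10; 7]); (4, [:: 5; 15; 7; 3; 14]); (4, [:: 5; 15; 7; 6; 11]); (4, [:: 5; 15; 7; 10; 7]); (4, [:: 7; 15; 3; 5; 14]); (4, [:: 7; 15; 3; 12; 7]); (4, [:: 7; 15; 5; 6; 11]); (4, [:: 7; 15; 5; 10; 7]); (4, [:: 13; 15; 3; 6; 7])]);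
  ([:: 7; 15; 9; 6; 11],
   [:: (1, [:: 7; 15; 7; 5; 13]); (2, [:: 7; 15; 7; 3; 14]); (2, [:: 7; 15; 7; 6; 11]); (4, [:: 5; 15; 7; 3; 14]); (4, [:: 5; 15; 7; 6; 11])]);
  ([:: 7; 15; 9; 7; 10],
   [:: (1, [:: 5; 15; 7; 7; 13]); (1, [:: 7; 15; 7; 7; 11]); (2, [:: 3; 15; 7; 7; 14]); (2, [:: 6; 15; 7; 7; 11]); (2, [:: 7; 15; 7; 7; 10]); (4, [:: 5; 15; 7; 7; 10])]);
  ([:: 7; 15; 9; 14; 3],
   [:: (1, [:: 7; 15; 7; 13; 5]); (2, [:: 7; 15; 7; 11; 6]); (2, [:: 7; 15; 7; 14; 3]); (4, [:: 5; 15; 7; 11; 6]); (4, [:: 5; 15; 7; 14; 3])]);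
  ([:: 7; 15; 9; 15; 2],
   [:: (1, [:: 5; 15; 7; 15; 5]); (1, [:: 7; 15; 7; 15; 3]); (2, [:: 3; 15; 7; 15; 6]); (2, [:: 6; 15; 7; 15; 3]); (2, [:: 7; 15; 7; 15; 2]); (4, [:: 5; 15; 7; 15; 2])]);
  ([:: 7; 15; 11; 7; 8],
   [:: (1, [:: 5; 15; 13; 7; 7]); (1, [:: 7; 15; 11; 7; 7]); (1, [:: 7; 15; 13; 3; 9]); (1, [:: 7; 15; 13; 5; 7]); (2, [:: 3; 15; 14; 7; 7]); (2, [:: 6; 15; 11; 7; 7]); (2, [:: 7; 15; 10; 7; 7]); (2, [:: 7; 15; 11; 3; 10]); (2, [:: 7; 15; 11; 6; 7]); (2, [:: 7; 15; 14; 3; 7]); (4, [:: 5; 15; 10; 7; 7]); (4, [:: 5; 15; 11; 6; 7]); (4, [:: 5; 15; 14; 3; 7])]);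
  ([:: 7; 15; 15; 3; 8],
   [:: (1, [:: 5; 15; 15; 5; 7]); (1, [:: 7; 15; 15; 3; 7]); (2, [:: 3; 15; 15; 6; 7]); (2, [:: 6; 15; 15; 3; 7]); (2, [:: 7; 15; 15; 2; 7]); (4, [:: 5; 15; 15; 2; 7])]);
  ([:: 7; 15; 15; 8; 3],
   [:: (1, [:: 7; 15; 15; 5; 5]); (2, [:: 7; 15; 15; 3; 6]); (2, [:: 7; 15; 15; 6; 3]); (4, [:: 5; 15; 15; 3; 6]); (4, [:: 5; 15; 15; 6; 3])]);
  ([:: 7; 15; 15; 9; 2],
   [:: (1, [:: 5; 15; 15; 7; 5]); (1, [:: 7; 15; 15; 7; 3]); (2, [:: 3; 15; 15; 7; 6]); (2, [:: 6; 15; 15; 7; 3]); (2, [:: 7; 15; 15; 7; 2]); (4, [:: 5; 15; 15; 7; 2])]);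
  ([:: 15; 3; 7; 8; 15],
   [:: (1, [:: 15; 3; 7; 7; 15]); (2, [:: 15; 2; 7; 7; 15]); (4, [:: 15; 3; 4; 7; 15])]);
  ([:: 15; 3; 7; 15; 8],
   [:: (1, [:: 15; 3; 7; 15; 7]); (2, [:: 15; 2; 7; 15; 7]); (4, [:: 15; 3; 4; 15; 7])]);
  ([:: 15; 3; 15; 7; 8],
   [:: (1, [:: 15; 3; 15; 7; 7]); (2, [:: 15; 2; 15; 7; 7]); (4, [:: 15; 3; 15; 4; 7])]);
  ([:: 15; 7; 3; 8; 15],
   [:: (1, [:: 15; 5; 5; 7; 15]); (1, [:: 15; 7; 3; 7; 15]); (2, [:: 15; 3; 6; 7; 15]); (2, [:: 15; 6; 3; 7; 15]); (2, [:: 15; 7; 2; 7; 15]); (4, [:: 15; 5; 2; 7; 15])]);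
  ([:: 15; 7; 3; 15; 8],
   [:: (1, [:: 15; 5; 5; 15; 7]); (1, [:: 15; 7; 3; 15; 7]); (2, [:: 15; 3; 6; 15; 7]); (2, [:: 15; 6; 3; 15; 7]); (2, [:: 15; 7; 2; 15; 7]); (4, [:: 15; 5; 2; 15; 7])]);
  ([:: 15; 7; 8; 3; 15],
   [:: (1, [:: 15; 7; 5; 5; 15]); (2, [:: 15; 7; 3; 6; 15]); (2, [:: 15; 7; 6; 3; 15]); (4, [:: 15; 5; 3; 6; 15]); (4, [:: 15; 5; 6; 3; 15])]);
  ([:: 15; 7; 8; 7; 11],
   [:: (1, [:: 15; 7; 5; 7; 13]); (2, [:: 15; 7; 3; 7; 14]); (2, [:: 15; 7; 6; 7; 11]); (4, [:: 15; 5; 3; 7; 14]); (4, [:: 15; 5; 6; 7; 11])]);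
  ([:: 15; 7; 8; 15; 3],
   [:: (1, [:: 15; 7; 5; 15; 5]); (2, [:: 15; 7; 3; 15; 6]); (2, [:: 15; 7; 6; 15; 3]); (4, [:: 15; 5; 3; 15; 6]); (4, [:: 15; 5; 6; 15; 3])]);
  ([:: 15; 7; 9; 2; 15],
   [:: (1, [:: 15; 5; 7; 5; 15]); (1, [:: 15; 7; 7; 3; 15]); (2, [:: 15; 3; 7; 6; 15]); (2, [:: 15; 6; 7; 3; 15]); (2, [:: 15; 7; 7; 2; 15]); (4, [:: 15; 5; 7; 2; 15])]);
  ([:: 15; 7; 9; 3; 14],
   [:: (1, [:: 15; 5; 7; 13; 7]); (1, [:: 15; 7; 7; 5; 13]); (1, [:: 15; 7; 7; 11; 7]); (1, [:: 15; 11; 3; 5; 13]); (2, [:: 15; 3; 7; 14; 7]); (2, [:: 15; 6; 7; 11; 7]); (2, [:: 15; 7; 7; 3; 14]); (2, [:: 15; 7; 7; 6; 11]); (2, [:: 15; 7; 7; 10; 7]); (2, [:: 15; 11; 3; 6; 11]); (2, [:: 15; 11; 3; 10; 7]); (4, [:: 15; 5; 7; 3; 14]); (4, [:: 15; 5; 7; 6; 11]); (4, [:: 15; 5; 7; 10; 7]); (4, [:: 15; 7; 3; 5; 14]); (4, [:: 15; 7; 3; 12; 7]); (4, [:: 15; 7; 5; 6; 11]); (4, [:: 15; 7; 5; 10; 7]); (4, [:: 15; 13; 3; 6; 7])]);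
  ([:: 15; 7; 9; 6; 11],
   [:: (1, [:: 15; 7; 7; 5; 13]); (2, [:: 15; 7; 7; 3; 14]); (2, [:: 15; 7; 7; 6; 11]); (4, [:: 15; 5; 7; 3; 14]); (4, [:: 15; 5; 7; 6; 11])]);
  ([:: 15; 7; 9; 7; 10],
   [:: (1, [:: 15; 5; 7; 7; 13]); (1, [:: 15; 7; 7; 7; 11]); (2, [:: 15; 3; 7; 7; 14]); (2, [:: 15; 6; 7; 7; 11]); (2, [:: 15; 7; 7; 7; 10]); (4, [:: 15; 5; 7; 7; 10])]);
  ([:: 15; 7; 9; 14; 3],
   [:: (1, [:: 15; 7; 7; 13; 5]); (2, [:: 15; 7; 7; 11; 6]); (2, [:: 15; 7; 7; 14; 3]); (4, [:: 15; 5; 7; 11; 6]); (4, [:: 15; 5; 7; 14; 3])]);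
  ([:: 15; 7; 9; 15; 2],
   [:: (1, [:: 15; 5; 7; 15; 5]); (1, [:: 15; 7; 7; 15; 3]); (2, [:: 15; 3; 7; 15; 6]); (2, [:: 15; 6; 7; 15; 3]); (2, [:: 15; 7; 7; 15; 2]); (4, [:: 15; 5; 7; 15; 2])]);
  ([:: 15; 7; 11; 7; 8],
   [:: (1, [:: 15; 5; 13; 7; 7]); (1, [:: 15; 7; 11; 7; 7]); (1, [:: 15; 7; 13; 3; 9]); (1, [:: 15; 7; 13; 5; 7]); (2, [:: 15; 3; 14; 7; 7]); (2, [:: 15; 6; 11; 7; 7]); (2, [:: 15; 7; 10; 7; 7]); (2, [:: 15; 7; 11; 3; 10]); (2, [:: 15; 7; 11; 6; 7]); (2, [:: 15; 7; 14; 3; 7]); (4, [:: 15; 5; 10; 7; 7]); (4, [:: 15; 5; 11; 6; 7]); (4, [:: 15; 5; 14; 3; 7])]);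
  ([:: 15; 7; 15; 3; 8],
   [:: (1, [:: 15; 5; 15; 5; 7]); (1, [:: 15; 7; 15; 3; 7]); (2, [:: 15; 3; 15; 6; 7]); (2, [:: 15; 6; 15; 3; 7]); (2, [:: 15; 7; 15; 2; 7]); (4, [:: 15; 5; 15; 2; 7])]);
  ([:: 15; 7; 15; 8; 3],
   [:: (1, [:: 15; 7; 15; 5; 5]); (2, [:: 15; 7; 15; 3; 6]); (2, [:: 15; 7; 15; 6; 3]); (4, [:: 15; 5; 15; 3; 6]); (4, [:: 15; 5; 15; 6; 3])]);
  ([:: 15; 7; 15; 9; 2],
   [:: (1, [:: 15; 5; 15; 7; 5]); (1, [:: 15; 7; 15; 7; 3]); (2, [:: 15; 3; 15; 7; 6]); (2, [:: 15; 6; 15; 7; 3]); (2, [:: 15; 7; 15; 7; 2]); (4, [:: 15; 5; 15; 7; 2])]);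
  ([:: 15; 15; 3; 7; 8],
   [:: (1, [:: 15; 15; 3; 7; 7]); (2, [:: 15; 15; 2; 7; 7]); (4, [:: 15; 15; 3; 4; 7])]);
  ([:: 15; 15; 7; 3; 8],
   [:: (1, [:: 15; 15; 5; 5; 7]); (1, [:: 15; 15; 7; 3; 7]); (2, [:: 15; 15; 3; 6; 7]); (2, [:: 15; 15; 6; 3; 7]); (2, [:: 15; 15; 7; 2; 7]); (4, [:: 15; 15; 5; 2; 7])]);
  ([:: 15; 15; 7; 8; 3],
   [:: (1, [:: 15; 15; 7; 5; 5]); (2, [:: 15; 15; 7; 3; 6]); (2, [:: 15; 15; 7; 6; 3]); (4, [:: 15; 15; 5; 3; 6]); (4, [:: 15; 15; 5; 6; 3])]);
  ([:: 15; 15; 7; 9; 2],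
   [:: (1, [:: 15; 15; 5; 7; 5]); (1, [:: 15; 15; 7; 7; 3]); (2, [:: 15; 15; 3; 7; 6]); (2, [:: 15; 15; 6; 7; 3]); (2, [:: 15; 15; 7; 7; 2]); (4, [:: 15; 15; 5; 7; 2])])].

Lemma certificates_ok : all (fun c => certifies 5 4 c.1 c.2) certificates.
Proof. by vm_compute. Qed.

Lemma certified_strictly_inadmissible u :
  u \in map fst certificates -> strictly_inadmissible (monoseq 5 u).
Proof.
case/mapP=> [[v W] c_in ->] /=.
exact: certifies_strictly_inadmissible (allP certificates_ok _ c_in).
Qed.

Definition placements_certified (a : seq nat) : bool :=
  all (fun x => (nth 0 x 0 < nth 0 x 1 < nth 0 x 2) ==> (place x a \in map fst certificates))
      (permutations (iota 0 5)).

Lemma pmono_strictly_inadmissible a : placements_certified a ->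
  forall p : 'S_5, p ord0 < p (inord 1) < p (inord 2) -> strictly_inadmissible (pmono p a).
Proof.
move=> /allP cert_a p lt_p; rewrite pmono_place; apply: certified_strictly_inadmissible.
have /implyP := cert_a _ (etrans (mem_permutations _ _) (perm_seq_iota p)); apply.
by move: lt_p; rewrite -!nth_perm_seq !inordK.
Qed.

Definition insertions_certified (w : seq nat) : bool :=
  (size w == 4) &&
  all (fun r => take r w ++ 15 :: drop r w \in map fst certificates) (iota 0 5).

Lemma xr15_theta_strictly_inadmissible w : insertions_certified w ->
  forall r : 'I_5, strictly_inadmissible (xr15_theta r (mono4 w)).
Proof.
case/andP=> /eqP size_w /allP cert_w r; rewrite xr15_theta_mono4 //.
by apply/certified_strictly_inadmissible/cert_w; rewrite mem_iota ltn_ord.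
Qed.

Theorem lemma3p8 :
  (forall p : 'S_5, (p ord0 < p (inord 1) < p (inord 2))%N ->
     strictly_inadmissible (pmono p [:: 7; 9; 2; 15; 15]%N) /\
     strictly_inadmissible (pmono p [:: 3; 7; 8; 15; 15]%N) /\
     strictly_inadmissible (pmono p [:: 7; 3; 8; 15; 15]%N) /\
     strictly_inadmissible (pmono p [:: 7; 8; 3; 15; 15]%N)) /\
  (forall (r : 'I_5) (w : seq nat),
     w \in [:: [:: 7; 8; 7; 11]; [:: 7; 9; 3; 14]; [:: 7; 9; 6; 11];
               [:: 7; 9; 7; 10]; [:: 7; 9; 14; 3]; [:: 7; 11; 7; 8]]%N ->
     strictly_inadmissible (xr15_theta r (mono4 w))) /\
  strictly_inadmissible (mono5 [:: 7; 9; 7; 14; 11]%N) /\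
  strictly_inadmissible (mono5 [:: 7; 9; 14; 7; 11]%N).
Proof.
split; [|split; [|split]].
- move=> p lt_p; split; [|split; [|split]];
    by apply: pmono_strictly_inadmissible lt_p; vm_compute.
- move=> r w w_in; apply: xr15_theta_strictly_inadmissible.
  by move: w w_in; apply/allP; vm_compute.
- by apply: certified_strictly_inadmissible; vm_compute.
- by apply: certified_strictly_inadmissible; vm_compute.
Qed.
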